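(* Let $R_1>1$ be an odd integer, $R_2>1$ an odd squarefree integer with $\gcd(R_1,R_2)=1$, $N=R_1R_2$, and let $\chi(n)=\left(\frac{n}{R_1R_2}\right)$ be the Jacobi symbol. Then the $R_1\times R_2$ finite Zak transform of $\chi$ is $$X_{R_2}(j,k)=c_{R_2}\left(\frac{R_1}{R_2}\right)e^{-2\pi i\frac{R_1^{-1}jk}{R_2}}\left(\frac{j}{R_2}\right)\left(\frac{k}{R_1}\right),\qquad 0\le j<R_2,\ 0\le k<R_1,$$ where $R_1^{-1}$ is the inverse of $R_1$ modulo $R_2$ and $c_{R_2}=\sum_{b=0}^{R_2-1}\left(\frac{b}{R_2}\right)e^{2\pi i b/R_2}$.
   Context: $\left(\frac{a}{M}\right)$ denotes the Jacobi symbol for odd positive $M$ (zero when $\gcd(a,M)>1$). For $N=LM$ and an $N$-periodic sequence $x$, the finite Zak transform is $X_L(j,k)=\sum_{r=0}^{L-1}x(k+rM)e^{2\pi i rj/L}$, $0\le j<L$, $0\le k<M$; here $L=R_2$, $M=R_1$. *)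

From mathcomp Require Import all_boot all_order all_algebra.
From mathcomp Require Import all_classical all_reals.
From mathcomp Require Import trigo.
From mathcomp Require Import complex.
Set Implicit Arguments. Unset Strict Implicit. Unset Printing Implicit Defensive.
Import Order.TTheory GRing.Theory Num.Theory.
Local Open Scope ring_scope.

Definition legendre (a : int) (p : nat) : int :=
  if (p%:Z %| a)%Z then 0
  else if [exists x : 'I_p, (p%:Z %| (x%:Z) ^+ 2 - a)%Z] then 1 else -1.

Definition jacobi (a : int) (M : nat) : int :=
  \prod_(p <- primes M) legendre a p ^+ logn p M.

Definition squarefree (n : nat) : bool :=
  [forall p : 'I_n.+1, prime p ==> ~~ (p * p %| n)%N].

Definition ex (R : realType) (x : R) : R[i] :=
  Complex (cos (2 * pi * x)) (sin (2 * pi * x)).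

Definition zak (R : realType) (x : nat -> R[i]) (L M j k : nat) : R[i] :=
  \sum_(r < L) x (k + r * M)%N * ex ((r * j)%:R / L%:R).

Definition gauss (R : realType) (L : nat) : R[i] :=
  \sum_(b < L) (jacobi b L)%:~R * ex ((b : nat)%:R / L%:R : R).

From mathcomp Require Import all_boot all_order all_algebra.
From mathcomp Require Import cyclic finfield.
From mathcomp Require Import all_classical all_reals.
From mathcomp Require Import trigo.
From mathcomp Require Import complex.
From mathcomp Require Import ring.
Set Implicit Arguments. Unset Strict Implicit. Unset Printing Implicit Defensive.
Import Order.TTheory GRing.Theory Num.Theory.
Local Open Scope ring_scope.

(* Write n = k + r R1 with r < R2.  The Jacobi symbol factors as
   (n / R1)(n / R2) = (k / R1)(n / R2), and with c = R1^-1 j mod R2 the phase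
   r j equals c n - c k mod R2.  Hence X(j,k) is (k / R1) e(-c k / R2) times
   the complete sum of (n / R2) e(c n / R2) over n = k + r R1, and since
   r |-> k + r R1 permutes Z/R2, that sum is the twisted Gauss sum
   sum_(b < R2) (b / R2) e(c b / R2) = (c / R2) c_R2.  Finally
   (c / R2) = (R1 / R2)(j / R2) because R1^-1 and R1 have the same symbol. *)

Section QuadraticCharacter.
Variable p : nat.
Hypothesis p_prime : prime p.

Lemma intr_Fp_eq0 (z : int) : ((z%:~R : 'F_p) == 0) = (p %| z)%Z.
Proof.
case: z => n; first by rewrite -(dvdn_pcharf (pchar_Fp p_prime)).
by rewrite NegzE mulrNz oppr_eq0 dvdzE /= -(dvdn_pcharf (pchar_Fp p_prime)).
Qed.

Definition qchar (u : 'F_p) : int :=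
  if u == 0 then 0 else if [exists y : 'F_p, y ^+ 2 == u] then 1 else -1.

Lemma legendreE (a : int) : legendre a p = qchar a%:~R.
Proof.
rewrite /legendre /qchar intr_Fp_eq0; case: ifP => // _.
suff -> : [exists x : 'I_p, (p%:Z %| (x%:Z) ^+ 2 - a)%Z] =
          [exists y : 'F_p, y ^+ 2 == a%:~R] by [].
apply/existsP/existsP => [[x]|[y]].
  rewrite -intr_Fp_eq0 rmorphB /= rmorphXn /= subr_eq0 => x_sq.
  by exists x%:R.
have y_lt : (val y < p)%N by rewrite -[X in (_ < X)%N](Fp_cast p_prime) ltn_ord.
rewrite -subr_eq0 => y_sq; exists (Ordinal y_lt).
by rewrite -intr_Fp_eq0 rmorphB /= rmorphXn /= -pmulrn natr_Zp.
Qed.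

Lemma Fp_fermat (x : 'F_p) : x != 0 -> x ^+ p.-1 = 1.
Proof.
move=> x_neq0; apply: (mulfI x_neq0); rewrite mulr1 -exprS prednK ?prime_gt0 //.
by have := expf_card x; rewrite card_Fp.
Qed.

Lemma Fp_primitive_root : exists g : 'F_p, p.-1.-primitive_root g.
Proof.
have p1_gt0 : (0 < p.-1)%N by rewrite -ltnS prednK ?prime_gt0 // prime_gt1.
have /hasP[g _ g_prim] : has p.-1.-primitive_root (enum (predC1 (0 : 'F_p))).
  apply: has_prim_root => //; last by rewrite -cardE cardC1 card_Fp.
    by apply/allP => x; rewrite mem_enum unity_rootE => /Fp_fermat ->.
  exact: enum_uniq.
by exists g.
Qed.

Hypothesis p_odd : odd p.

Section Generator.
Variable g : 'F_p.
Hypothesis g_prim : p.-1.-primitive_root g.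

Lemma gen_neq0 : g != 0.
Proof. by rewrite (prim_root_eq0 g_prim) -lt0n -ltnS prednK ?prime_gt0 // prime_gt1. Qed.

Lemma gen_log (x : 'F_p) : x != 0 -> exists k, x = g ^+ k.
Proof. by move=> x_neq0; have [i ->] := prim_rootP g_prim (Fp_fermat x_neq0); exists i. Qed.

(* As p - 1 is even, g^k is a square exactly when k is even. *)
Lemma square_gen_pow k : [exists y, y ^+ 2 == g ^+ k] = ~~ odd k.
Proof.
apply/existsP/idP => [[y /eqP y_sq]|k_even]; last first.
  exists (g ^+ k./2); rewrite -exprM mulnC.
  by rewrite -[X in _ == g ^+ X](odd_double_half k) (negbTE k_even) mul2n.
have y_neq0 : y != 0.
  apply: contra_eq_neq y_sq => ->; rewrite expr0n /= eq_sym.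
  by rewrite expf_eq0 (negbTE gen_neq0) andbF.
have [m y_eq] := gen_log y_neq0.
move: y_sq; rewrite y_eq -exprM => /eqP; rewrite (eq_prim_root_expr g_prim) => /eqP.
have two_dvd : (2 %| p.-1)%N by rewrite dvdn2 -oddS prednK ?prime_gt0.
move=> /(congr1 (modn^~ 2)); rewrite !modn_dvdm // => parity_eq.
by rewrite -dvdn2 /dvdn -parity_eq modnMl.
Qed.

Lemma qchar_gen_pow k : qchar (g ^+ k) = (-1) ^+ odd k.
Proof.
rewrite /qchar expf_eq0 (negbTE gen_neq0) andbF square_gen_pow.
by case: (odd k).
Qed.
End Generator.

Lemma qcharM (u v : 'F_p) : qchar (u * v) = qchar u * qchar v.
Proof.
have [g g_prim] := Fp_primitive_root.
have [->|u_neq0] := eqVneq u 0; first by rewrite mul0r /qchar eqxx mul0r.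
have [->|v_neq0] := eqVneq v 0; first by rewrite mulr0 /qchar eqxx mulr0.
have [i ->] := gen_log g_prim u_neq0; have [l ->] := gen_log g_prim v_neq0.
by rewrite -exprD !(qchar_gen_pow g_prim) oddD signr_addb.
Qed.

(* Multiplying by the nonsquare g permutes F_p and negates the character,
   so the character sums to zero. *)
Lemma qchar_sum : \sum_(u : 'F_p) qchar u = 0.
Proof.
have [g g_prim] := Fp_primitive_root.
have qchar_g : qchar g = -1 by rewrite -[g]expr1 (qchar_gen_pow g_prim).
have : \sum_(u : 'F_p) qchar u = qchar g * \sum_(u : 'F_p) qchar u.
  rewrite mulr_sumr {1}(reindex_inj (mulfI (gen_neq0 g_prim))) /=.
  by apply: eq_bigr => u _; rewrite qcharM.
rewrite qchar_g mulN1r => /eqP; rewrite -subr_eq0 opprK -mulr2n -mulr_natr.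
by rewrite mulf_eq0 /= orbF => /eqP.
Qed.
End QuadraticCharacter.

Lemma legendre_eqmod p (a b : int) : prime p -> (p%:Z %| a - b)%Z ->
  legendre a p = legendre b p.
Proof.
move=> p_prime p_dvd; rewrite !(legendreE p_prime); congr qchar.
by apply/eqP; rewrite -subr_eq0 -rmorphB /= intr_Fp_eq0.
Qed.

Lemma legendreM p (a b : int) : prime p -> odd p ->
  legendre (a * b) p = legendre a p * legendre b p.
Proof. by move=> p_prime p_odd; rewrite !(legendreE p_prime) rmorphM qcharM. Qed.

Lemma legendre1 p : prime p -> legendre 1 p = 1.
Proof.
move=> p_prime; rewrite (legendreE p_prime) /qchar oner_eq0.
by case: existsP => // -[]; exists 1; rewrite expr1n.
Qed.

Lemma legendre_sqr p (a : int) : ~~ (p%:Z %| a)%Z -> legendre a p ^+ 2 = 1.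
Proof. by rewrite /legendre => /negbTE ->; case: ifP. Qed.

Lemma legendre_eq0 p (a : int) : (p%:Z %| a)%Z -> legendre a p = 0.
Proof. by rewrite /legendre => ->. Qed.

Lemma legendre_sum p : prime p -> odd p -> \sum_(x < p) legendre x p = 0.
Proof.
move=> p_prime p_odd.
under eq_bigr do rewrite (legendreE p_prime).
rewrite -(big_mkord xpredT (fun x : nat => qchar (Posz x)%:~R)).
rewrite -[X in \sum_(0 <= _ < X) _](Fp_cast p_prime) big_mkord.
rewrite -[RHS](qchar_sum p_prime p_odd).
by apply: eq_bigr => x _; rewrite -pmulrn natr_Zp.
Qed.

(* The Jacobi symbol as a product over all primes below a bound B > M; a
   common index range is what makes the denominator multiplicative. *)
Lemma jacobi_prod_below (a : int) M B : (0 < M)%N -> (M < B)%N ->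
  jacobi a M = \prod_(0 <= q < B | prime q) legendre a q ^+ logn q M.
Proof.
move=> M_gt0 M_lt_B; rewrite /jacobi.
have primes_below : perm_eq (primes M) [seq q <- index_iota 0 B | q \in primes M].
  apply: uniq_perm; rewrite ?primes_uniq ?filter_uniq ?iota_uniq // => q.
  rewrite mem_filter mem_index_iota; case qM: (q \in primes M) => //=.
  move: qM; rewrite mem_primes => /and3P[_ _ q_dvd].
  by apply/esym/(leq_ltn_trans (dvdn_leq M_gt0 q_dvd)).
rewrite (perm_big _ primes_below) big_filter big_mkcond [RHS]big_mkcond /=.
apply: eq_bigr => q _; rewrite mem_primes M_gt0 /=.
case: (prime q) => //=; case: (boolP (q %| M)%N) => // q_ndvd.
by rewrite lognE (negbTE q_ndvd) !andbF.
Qed.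

Lemma jacobiMr (a : int) m n : (0 < m)%N -> (0 < n)%N ->
  jacobi a (m * n) = jacobi a m * jacobi a n.
Proof.
move=> m_gt0 n_gt0; have mn_gt0 : (0 < m * n)%N by rewrite muln_gt0 m_gt0.
rewrite !(@jacobi_prod_below a _ (m * n).+1) ?ltnS ?leq_pmull ?leq_pmulr //.
by rewrite -big_split /=; apply: eq_bigr => q _; rewrite lognM // exprD.
Qed.

Lemma jacobiMl (a b : int) M : odd M -> jacobi (a * b) M = jacobi a M * jacobi b M.
Proof.
move=> M_odd; rewrite /jacobi -big_split /= big_seq [RHS]big_seq.
apply: eq_bigr => q; rewrite mem_primes => /and3P[q_prime _ q_dvd].
by rewrite legendreM ?exprMn // (dvdn_odd q_dvd M_odd).
Qed.

Lemma jacobi_eqmod (a b : int) M : (M%:Z %| a - b)%Z -> jacobi a M = jacobi b M.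
Proof.
move=> M_dvd; rewrite /jacobi big_seq [RHS]big_seq.
apply: eq_bigr => q; rewrite mem_primes => /and3P[q_prime _ q_dvd].
by rewrite (@legendre_eqmod q a b) // (dvdz_trans _ M_dvd) ?dvdzE.
Qed.

Lemma jacobi_modn (n : nat) M : jacobi (n %% M)%N M = jacobi n M.
Proof.
apply: jacobi_eqmod; rewrite {2}(divn_eq n M) PoszD opprD addrCA subrr addr0.
by rewrite dvdzE abszN /= dvdn_mull.
Qed.

Lemma jacobi1 M : jacobi 1 M = 1.
Proof.
rewrite /jacobi big_seq big1 // => q; rewrite mem_primes => /and3P[q_prime _ _].
by rewrite legendre1 // expr1n.
Qed.

Lemma jacobi_sqr (a : nat) M : coprime a M -> jacobi a M ^+ 2 = 1.
Proof.
move=> co_aM; rewrite /jacobi -prodrXl big_seq big1 // => q.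
rewrite mem_primes => /and3P[q_prime _ q_dvdM].
rewrite exprAC legendre_sqr ?expr1n // dvdzE /=.
apply: contraL co_aM => q_dvda; apply/negP => /eqP gcd1.
have : (q %| gcdn a M)%N by rewrite dvdn_gcd q_dvda.
by rewrite gcd1 dvdn1 => /eqP q1; rewrite q1 in q_prime.
Qed.

Lemma jacobi_eq0 (a : int) M q : q \in primes M -> (q%:Z %| a)%Z -> jacobi a M = 0.
Proof.
move=> qM q_dvd; rewrite /jacobi (bigD1_seq q) ?primes_uniq //= legendre_eq0 //.
rewrite expr0n; case: eqP => [|_]; last by rewrite mul0r.
by move/eqP; rewrite eqn0Ngt logn_gt0 qM.
Qed.

Lemma jacobi_prime (b : int) q : prime q -> jacobi b q = legendre b q.
Proof. by move=> q_prime; rewrite /jacobi primes_prime // big_seq1 logn_prime // eqxx expr1. Qed.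

Section AdditiveCharacter.
Variable R : realType.

Lemma exD (x y : R) : ex (x + y) = ex x * ex y.
Proof. by rewrite /ex mulrDr cosD sinD /=; congr Complex; ring. Qed.

Lemma ex_nat (n : nat) : ex (n%:R : R) = 1.
Proof.
have ex1 : ex (1 : R) = 1 by rewrite /ex mulr1 mulr_natl cos2pi sin2pi.
elim: n => [|n IHn]; first by rewrite /ex mulr0 cos0 sin0.
by rewrite -addn1 natrD exD IHn ex1 mulr1.
Qed.

Lemma ex_eqmod (a b N : nat) : (0 < N)%N -> a = b %[mod N] ->
  ex (a%:R / N%:R : R) = ex (b%:R / N%:R).
Proof.
move=> N_gt0 ab_eq.
have ex_modn n : ex (n%:R / N%:R : R) = ex ((n %% N)%:R / N%:R).
  rewrite {1}(divn_eq n N) natrD mulrDl natrM mulfK ?pnatr_eq0 -?lt0n //.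
  by rewrite exD ex_nat mul1r.
by rewrite ex_modn ab_eq -ex_modn.
Qed.
End AdditiveCharacter.

Lemma eqn_modMr_coprime N c r r' : coprime c N ->
  (r * c = r' * c %[mod N])%N -> (r = r' %[mod N])%N.
Proof.
move=> co_cN; wlog r'_le_r : r r' / (r' <= r)%N.
  by move=> IH; case: (leqP r' r) => [|/ltnW] r_le r_eq; [apply: IH | apply/esym/IH].
move=> /eqP; rewrite eqn_mod_dvd ?leq_mul2r ?r'_le_r ?orbT // -mulnBl.
by rewrite Gauss_dvdl 1?coprime_sym // -eqn_mod_dvd // => /eqP.
Qed.

(* For an N-periodic F and c prime to N, r |-> k + r c permutes Z/N, so a
   complete sum of F is unchanged by this affine change of variables. *)
Lemma sum_affine_reindex (V : nmodType) N (F : nat -> V) c k : (0 < N)%N ->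
  (forall n, F (n %% N)%N = F n) -> coprime c N ->
  \sum_(r < N) F (k + r * c)%N = \sum_(b < N) F b.
Proof.
move=> N_gt0 F_per co_cN.
pose h (r : 'I_N) : 'I_N := Ordinal (ltn_pmod (k + r * c) N_gt0).
have h_inj : injective h.
  move=> r r' /(congr1 val) /= /eqP; rewrite eqn_modDl.
  by move=> /eqP /(eqn_modMr_coprime co_cN); rewrite !modn_small // => /val_inj.
by rewrite [RHS](reindex_inj h_inj); apply: eq_bigr => r _; rewrite F_per.
Qed.

Lemma sum_ord_mul (V : nmodType) N n m (f : nat -> V) : N = (n * m)%N ->
  \sum_(b < N) f b = \sum_(t < n) \sum_(s < m) f (t * m + s)%N.
Proof.
move=> ->; elim: n => [|n IHn]; first by rewrite mul0n !big_ord0.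
rewrite big_ord_recr /= -IHn mulSn addnC -!(big_mkord xpredT).
rewrite (big_cat_nat _ (leq_addr _ _)) //=; congr (_ + _).
rewrite -{1}[(n * m)%N]add0n big_addn addKn big_mkord.
by apply: eq_bigr => i _; rewrite addnC.
Qed.

Lemma squarefree_coprime_cofactor N q : (0 < N)%N -> squarefree N -> prime q ->
  (q %| N)%N -> coprime q (N %/ q).
Proof.
move=> N_gt0 N_sqf q_prime q_dvd; rewrite prime_coprime //; apply/negP => q_dvd_m.
have q_lt : (q < N.+1)%N by rewrite ltnS dvdn_leq.
have N_eq : (q * (N %/ q))%N = N by rewrite mulnC divnK.
move: (forallP N_sqf (Ordinal q_lt)); rewrite /= q_prime /= => /negP; apply.
by rewrite -N_eq dvdn_pmul2l ?prime_gt0.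
Qed.

Lemma not_coprime_common_prime a N : (0 < N)%N -> ~~ coprime a N ->
  exists2 q, prime q & (q %| a)%N && (q %| N)%N.
Proof.
move=> N_gt0 nco; exists (pdiv (gcdn a N)).
  by apply: pdiv_prime; rewrite ltn_neqAle eq_sym nco gcdn_gt0 N_gt0 orbT.
by rewrite -dvdn_gcd pdiv_dvd.
Qed.

Lemma legendre_progression_sum q m s : prime q -> odd q -> coprime m q ->
  \sum_(i < q) legendre (s + i * m)%N q = 0.
Proof.
move=> q_prime q_odd co_mq.
have per n : legendre (n %% q)%N q = legendre n q by rewrite -!jacobi_prime // jacobi_modn.
rewrite (@sum_affine_reindex _ q (fun n : nat => legendre n q) m s) ?prime_gt0 //.
exact: legendre_sum.
Qed.

(* If a is prime to N this is the substitution b -> a b;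
   otherwise a prime q dividing a and N splits b = t (N/q) + s, and the sum
   over t is a complete sum of the Legendre symbol mod q. *)
Section TwistedGaussSum.
Variable R : realType.
Local Notation C := R[i].

Definition gauss_term (N a b : nat) : C :=
  (jacobi b N)%:~R * ex ((a * b)%:R / N%:R : R).

Lemma gauss_term_modn N a b : (0 < N)%N -> gauss_term N a (b %% N) = gauss_term N a b.
Proof.
move=> N_gt0; rewrite /gauss_term jacobi_modn; congr (_ * _).
by apply: ex_eqmod; rewrite ?modnMmr.
Qed.

(* The coprime case: substitute b -> a b and use (a / N)^2 = 1. *)
Lemma gauss_twist_coprime N a : odd N -> coprime a N ->
  \sum_(b < N) gauss_term N a b = (jacobi a N)%:~R * gauss R N.
Proof.
move=> N_odd co_aN; have N_gt0 := odd_gt0 N_odd.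
have chi_a_sqr : (jacobi a N)%:~R * (jacobi a N)%:~R = 1 :> C.
  by rewrite -intrM -expr2 jacobi_sqr.
have per n : gauss_term N 1 (n %% N) = gauss_term N 1 n by apply: gauss_term_modn.
have -> : gauss R N = \sum_(b < N) gauss_term N 1 b.
  by apply: eq_bigr => b _; rewrite /gauss_term mul1n.
rewrite -(sum_affine_reindex 0 N_gt0 per co_aN) mulr_sumr; apply: eq_bigr => r _.
rewrite /gauss_term add0n mul1n PoszM jacobiMl // intrM (mulnC r).
by rewrite [_ * (jacobi a N)%:~R]mulrC !mulrA chi_a_sqr mul1r.
Qed.

(* The degenerate case q | gcd(a, N): every inner sum over t vanishes. *)
Lemma gauss_twist_degenerate N a q : odd N -> squarefree N -> prime q ->
  (q %| a)%N -> (q %| N)%N -> \sum_(b < N) gauss_term N a b = 0.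
Proof.
move=> N_odd N_sqf q_prime q_dvd_a q_dvd_N; have N_gt0 := odd_gt0 N_odd.
pose m := (N %/ q)%N; have N_qm : N = (q * m)%N by rewrite mulnC divnK.
have m_gt0 : (0 < m)%N by rewrite /m divn_gt0 ?prime_gt0 // dvdn_leq.
have co_mq : coprime m q.
  by rewrite coprime_sym squarefree_coprime_cofactor.
have [a' a_eq] : exists a', a = (a' * q)%N by exists (a %/ q)%N; rewrite divnK.
rewrite (sum_ord_mul _ N_qm) exchange_big; apply: big1 => s _ /=.
have term_split (t : nat) : gauss_term N a (t * m + s)
    = (legendre (s + t * m)%N q)%:~R * ((jacobi s m)%:~R * ex ((a * s)%:R / N%:R : R)).
  have jac_m : jacobi (t * m + s)%N m = jacobi s m.
    by rewrite -jacobi_modn modnMDl jacobi_modn.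
  have ex_eq : ex ((a * (t * m + s))%:R / N%:R : R) = ex ((a * s)%:R / N%:R).
    by apply: ex_eqmod; rewrite // mulnDr {1}a_eq N_qm mulnACA modnMDl.
  rewrite /gauss_term {1}N_qm (jacobiMr _ (prime_gt0 q_prime) m_gt0).
  by rewrite jac_m ex_eq (addnC (t * m)) (jacobi_prime _ q_prime) intrM -mulrA.
under eq_bigr do rewrite term_split.
rewrite -mulr_suml -rmorph_sum legendre_progression_sum ?rmorph0 ?mul0r //.
exact: dvdn_odd q_dvd_N N_odd.
Qed.

(* The twisted Gauss sum for odd squarefree N; both sides vanish when a is
   not prime to N. *)
Lemma gauss_twist N a : odd N -> squarefree N ->
  \sum_(b < N) gauss_term N a b = (jacobi a N)%:~R * gauss R N.
Proof.
move=> N_odd N_sqf; have [co_aN|nco] := boolP (coprime a N).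
  exact: gauss_twist_coprime.
have [q q_prime /andP[q_dvd_a q_dvd_N]] := not_coprime_common_prime (odd_gt0 N_odd) nco.
rewrite (gauss_twist_degenerate N_odd N_sqf q_prime) // (@jacobi_eq0 a N q) ?mul0r //.
by rewrite mem_primes q_prime odd_gt0.
Qed.
End TwistedGaussSum.

Section ZakTransform.
Variables (R : realType) (R1 R2 R1inv : nat).
Hypotheses (R1_odd : odd R1) (R2_odd : odd R2) (co_R1R2 : coprime R1 R2).
Hypothesis R1inv_inv : (R1 * R1inv %% R2 = 1)%N.

(* With n = k + r R1: (n / R1 R2) = (k / R1)(n / R2), and since R1 R1^-1 = 1
   mod R2, r j = R1^-1 j n - R1^-1 j k mod R2. *)
Lemma zak_jacobi_term j k r :
  (jacobi (k + r * R1)%N (R1 * R2))%:~R * ex ((r * j)%:R / R2%:R : R)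
  = (jacobi k R1)%:~R * ex (- ((R1inv * j * k)%:R / R2%:R))
    * gauss_term R R2 (R1inv * j) (k + r * R1).
Proof.
have jac_R1 : jacobi (k + r * R1)%N R1 = jacobi k R1.
  by rewrite -jacobi_modn addnC modnMDl jacobi_modn.
have ex_split : ex ((r * j)%:R / R2%:R : R)
    = ex (- ((R1inv * j * k)%:R / R2%:R)) * ex ((R1inv * j * (k + r * R1))%:R / R2%:R).
  rewrite -exD mulnDr natrD mulrDl addKr; apply: ex_eqmod; rewrite ?odd_gt0 //.
  rewrite (_ : (R1inv * j * (r * R1) = (r * j) * (R1 * R1inv))%N); last by ring.
  by rewrite -[((r * j * _) %% R2)%N]modnMmr R1inv_inv muln1.
rewrite jacobiMr ?odd_gt0 // intrM jac_R1 ex_split /gauss_term; ring.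
Qed.

(* (R1^-1 / R2) (R1 / R2) = (1 / R2) = 1, and both are signs. *)
Lemma jacobi_modinv : jacobi R1inv R2 = jacobi R1 R2.
Proof.
have inv_prod : jacobi R1 R2 * jacobi R1inv R2 = 1.
  by rewrite -jacobiMl // -PoszM -jacobi_modn R1inv_inv jacobi1.
have sqr1 : jacobi R1 R2 ^+ 2 = 1 by apply: jacobi_sqr.
by rewrite -[LHS]mul1r -sqr1 expr2 -mulrA inv_prod mulr1.
Qed.
End ZakTransform.

(* As r runs over Z/R2 so does n = k + r R1, whence
   X(j,k) = (k / R1) e(-R1^-1 j k / R2) (R1^-1 j / R2) c_R2. *)
Theorem corollary5 (R : realType) (R1 R2 R1inv : nat) :
  odd R1 -> (1 < R1)%N -> odd R2 -> (1 < R2)%N -> squarefree R2 ->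
  coprime R1 R2 -> (R1 * R1inv %% R2 = 1)%N ->
  forall j k : nat, (j < R2)%N -> (k < R1)%N ->
    zak (fun n : nat => ((jacobi n (R1 * R2))%:~R : R[i])) R2 R1 j k
    = gauss R R2 * (jacobi R1 R2)%:~R
      * ex (- ((R1inv * j * k)%:R / R2%:R) : R)
      * (jacobi j R2)%:~R * (jacobi k R1)%:~R.
Proof.
move=> R1_odd _ R2_odd _ R2_sqf co_R1R2 R1inv_inv j k _ _.
have per n : gauss_term R R2 (R1inv * j) (n %% R2) = gauss_term R R2 (R1inv * j) n.
  by apply: gauss_term_modn; rewrite odd_gt0.
rewrite /zak; under eq_bigr do rewrite (zak_jacobi_term _ R1_odd R2_odd R1inv_inv).
rewrite -mulr_sumr (sum_affine_reindex k (odd_gt0 R2_odd) per co_R1R2).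
rewrite gauss_twist // PoszM jacobiMl // intrM (jacobi_modinv R2_odd co_R1R2 R1inv_inv); ring.
Qed.
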